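(* Let $p$ be a prime and let $A$, $B$ be $p$-groups with $|A|=p^a$, $|B|=p^b$, $a,b\ge1$. Suppose the maximum order of an element of $A$ is $p^d$ and the maximum order of an element of $B$ is $p^e$. Then the maximum order of an element of $A\wr B$ is $p^{d+e}$, and for every integer $k$, $$r_{A\wr B,k}=\sum_{i=0}^{e}\left(r_{B,i}-r_{B,i+1}\right)r_{A,k-i}^{\,p^{b-e+i}}.$$
   Context: For a finite $p$-group $G$ with $|G|=p^g$ and maximum element order $p^{f}$, and for $k\in\mathbb{Z}$, define $r_{G,k}=\frac{1}{p^g}\cdot\#\{x\in G:\ \mathrm{order}(x)\le p^{f-k}\}$ (so $r_{G,k}=1$ for $k\le 0$ and $r_{G,k}=0$ for $k>f$). For groups $A,B$, let $K=\prod_{b\in B}A$, on which $B$ acts by $x\cdot(\alpha_b)_b=(\alpha_{x^{-1}b})_b$ for $x\in B$; the wreath product $A\wr B$ is the semidirect product $K\rtimes B$ for this action. *)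

From HB Require Import structures.
From mathcomp Require Import all_boot all_order all_algebra all_fingroup.
Set Implicit Arguments. Unset Strict Implicit. Unset Printing Implicit Defensive.
Import GRing.Theory Num.Theory.

(* Wreath product A wr B = K x| B with K = prod_{b in B} A and
   (x . alpha)_b = alpha_{x^-1 b};  (f, x) * (g, y) = (f * (x . g), x * y). *)
Section Wreath.
Variables aT bT : finGroupType.

Definition wreath_type := ({ffun bT -> aT} * bT)%type.
HB.instance Definition _ := Finite.on wreath_type.

Definition wr_act (x : bT) (g : {ffun bT -> aT}) : {ffun bT -> aT} :=
  [ffun b => g (x^-1 * b)%g].

Definition wr_mul (u v : wreath_type) : wreath_type :=
  ([ffun b => (u.1 b * wr_act u.2 v.1 b)%g], (u.2 * v.2)%g).
Definition wr_one : wreath_type := ([ffun _ => 1%g], 1%g).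
Definition wr_inv (u : wreath_type) : wreath_type :=
  ([ffun b => (u.1 (u.2 * b)%g)^-1%g], (u.2)^-1%g).

Lemma wr_mulgA : associative wr_mul.
Proof.
move=> [f x] [g y] [h z]; rewrite /wr_mul /wr_act /=; congr (_, _).
  apply/ffunP=> b; rewrite /= !(ffunE (fun _ => _)). rewrite (mulgA (f b)) invMg; congr (_ * h _)%g; exact: mulgA.
exact: mulgA.
Qed.

Lemma wr_mul1g : left_id wr_one wr_mul.
Proof.
move=> [f x]; rewrite /wr_mul /wr_act /=; congr (_, _).
  by apply/ffunP=> b; rewrite /= !(ffunE (fun _ => _)) invg1 !mul1g.
by rewrite mul1g.
Qed.

Lemma wr_mulVg : left_inverse wr_one wr_inv wr_mul.
Proof.
move=> [f x]; rewrite /wr_mul /wr_act /=; congr (_, _).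
  by apply/ffunP=> b; rewrite /= !(ffunE (fun _ => _)) invgK mulVg.
by rewrite mulVg.
Qed.

HB.instance Definition _ := Finite_isGroup.Build wreath_type
  wr_mulgA wr_mul1g wr_mulVg.

End Wreath.

Notation "A \wr B" := (wreath_type A B) (at level 40, left associativity).

Definition max_order (gT : finGroupType) : nat := \max_(x : gT) #[x]%g.

Definition r_ratio (p : nat) (gT : finGroupType) (k : int) : rat :=
  let f := logn p (max_order gT) in
  (#|[set x : gT | (#[x]%g%:R <= (p%:R : rat) ^ (f%:Z - k))%R]|%:R
     / #|gT|%:R)%R.

From HB Require Import structures.
From mathcomp Require Import all_boot all_order all_algebra all_fingroup.
From mathcomp Require Import all_solvable zify ring.
Set Implicit Arguments. Unset Strict Implicit. Unset Printing Implicit Defensive.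
Import GRing.Theory Num.Theory.

(* An element (f, x) of A \wr B satisfies (f, x)^(#[x] q) = (y |-> N_y^q, 1),
   where N_y is the product of f along the <x>-coset of y starting at y; moving
   the starting point along the coset conjugates N_y.  For a transversal T of
   the |B|/#[x] cosets, replacing f by N on T is a bijection of the base group,
   so the proportion of f with (f, x)^(p^c) = 1 is the proportion of a in A with
   a^(p^(c-j)) = 1, raised to the power |B|/#[x] = p^(b-j), where #[x] = p^j.
   Averaging over x, grouped by j, gives the formula for r.  The maximal order
   is attained by an x of order p^e together with an f supported at 1 by an
   element of order p^d. *)

Lemma card_set_prod (I J : finType) (P : pred (I * J)) :
  #|[set u | P u]| = (\sum_(j : J) #|[set i | P (i, j)]|)%N.
Proof.
transitivity (\sum_(u : I * J) (if P u then 1 else 0))%N.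
  by rewrite -sum1_card big_mkcond; apply: eq_bigr => u _; rewrite inE.
transitivity (\sum_(i : I) \sum_(j : J) (if P (i, j) then 1 else 0))%N.
  by rewrite pair_bigA; apply: eq_bigr => -[].
rewrite exchange_big; apply: eq_bigr => j _.
by rewrite -sum1_card [RHS]big_mkcond; apply: eq_bigr => i _; rewrite inE.
Qed.

Lemma card_ffun_in (I J : finType) (D : {set I}) (S : {set J}) :
  #|[set g : {ffun I -> J} | [forall t in D, g t \in S]]| =
  (#|S| ^ #|D| * #|J| ^ #|~: D|)%N.
Proof.
pose F i : pred J := fun y => (i \notin D) || (y \in S).
have -> : [set g : {ffun I -> J} | [forall t in D, g t \in S]] = [set g in family F].
  apply/setP => g; rewrite !inE; apply/forall_inP/familyP => [gS i|gF i Di].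
    by rewrite /F; case: (boolP (i \in D)) => //= /gS.
  by have := gF i; rewrite /F /= Di.
rewrite cardsE card_family foldrE big_map big_enum /= (bigID (mem D)) /=.
rewrite [X in (X * _)%N](eq_bigr (fun _ => #|S|)); last first.
  by move=> i Di; apply: eq_card => y; rewrite /F /= Di.
rewrite [X in (_ * X)%N](eq_bigr (fun _ => #|J|)); last first.
  by move=> i D'i; apply: eq_card => y; rewrite /F /= D'i.
by rewrite !prod_nat_const; congr (_ ^ _ * _ ^ _)%N; apply: eq_card => i; rewrite inE.
Qed.

Section WreathPowers.
Variables aT bT : finGroupType.
Local Notation W := (aT \wr bT).
Local Open Scope group_scope.
Implicit Types (f g : {ffun bT -> aT}) (x y : bT).

Definition orbit_prod f x n y : aT := \prod_(i < n) f ((x ^+ i)^-1 * y).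

Lemma wr_expgE f x n :
  ((f, x) : W) ^+ n = ([ffun y => orbit_prod f x n y], x ^+ n).
Proof.
elim: n => [|n IHn].
  by congr (_, _); apply/ffunP=> y; rewrite !ffunE /orbit_prod big_ord0.
rewrite expgS IHn expgS; congr (_, _); apply/ffunP=> y.
rewrite !ffunE /orbit_prod big_ord_recl expg0 invg1 mul1g; congr (_ * _).
by apply: eq_bigr => i _; rewrite expgS invMg mulgA.
Qed.

Lemma wr_expg_order f x q :
  ((f, x) : W) ^+ (#[x] * q) = ([ffun y => orbit_prod f x #[x] y ^+ q], 1).
Proof.
rewrite expgM wr_expgE expg_order; elim: q => [|q IHq].
  by congr (_, _); apply/ffunP=> y; rewrite !ffunE.
rewrite !expgS IHq; congr (_, _); last exact: mulg1.
apply/ffunP=> y; rewrite /= !(ffunE (fun _ => _)) /wr_act /=.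
by rewrite invg1 mul1g expgS.
Qed.

Lemma wr_expg_order_eq1 f x q :
  (((f, x) : W) ^+ (#[x] * q) == 1) = [forall y, orbit_prod f x #[x] y ^+ q == 1].
Proof.
rewrite wr_expg_order xpair_eqE eqxx andbT; apply/eqP/forallP => [fq1 y|fq1].
  by rewrite -[_ ^+ q](ffunE (fun y => orbit_prod f x #[x] y ^+ q)) fq1 ffunE.
by apply/ffunP=> y; rewrite !ffunE; apply/eqP.
Qed.

Lemma order_dvdn_wr f x : #[x] %| #[(f, x) : W].
Proof.
have := expg_order ((f, x) : W); rewrite wr_expgE => -[_ /eqP].
by rewrite order_dvdn.
Qed.

Lemma expg_lt_order_neq1 x i : 0 < i < #[x] -> x ^+ i != 1.
Proof.
case: i => // i /andP[_ lt_ix]; apply: contraTneq lt_ix => /eqP/order_inf.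
by rewrite leqNgt.
Qed.

Lemma orbit_prod_recl f x y :
  orbit_prod f x #[x] y = f y * \prod_(i < #[x].-1) f ((x ^+ i.+1)^-1 * y).
Proof.
rewrite /orbit_prod; case: #[x] (order_gt0 x) => // n _.
by rewrite big_ord_recl expg0 invg1 mul1g.
Qed.

Lemma orbit_prod_conj f x y :
  orbit_prod f x #[x] (x^-1 * y) = orbit_prod f x #[x] y ^ f y.
Proof.
rewrite [in RHS]orbit_prod_recl /orbit_prod; case Ex: #[x] (order_gt0 x) => [//|n] _.
rewrite big_ord_recr /= mulgA -invMg -expgS -Ex expg_order invg1 mul1g.
rewrite /conjg !mulgA mulVg mul1g; congr (_ * _).
by apply: eq_bigr => i _; rewrite mulgA -invMg -expgS.
Qed.

Section CycleTransversal.
Variable x : bT.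

Definition cycle_transversal := [set y : bT | repr (<[x]> :* y) == y].
Local Notation T := cycle_transversal.

Lemma repr_rcoset_transversal y : repr (<[x]> :* y) \in T.
Proof. by rewrite inE rcoset_repr. Qed.

Lemma cycle_transversal_uniq s t : s \in T -> t \in T -> s \in <[x]> :* t -> s = t.
Proof. by rewrite !inE => /eqP{2}<- /eqP{2}<- /rcoset_eqP->. Qed.

Lemma card_cycle_transversal : (#|T| * #[x])%N = #|bT|.
Proof.
have inj_rcoset : {in T &, injective (rcoset <[x]>)}.
  move=> s t Ts Tt eq_st; apply: cycle_transversal_uniq => //.
  by apply/rcoset_eqP; rewrite -!rcosetE.
have im_rcoset : rcoset <[x]> @: T = rcosets <[x]> [set: bT].
  apply/setP => C; apply/imsetP/imsetP => [[t _ ->]|[y _ ->]]; first by exists t.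
  by exists (repr (<[x]> :* y)); rewrite ?repr_rcoset_transversal // !rcosetE rcoset_repr.
rewrite -(card_in_imset inj_rcoset) im_rcoset mulnC -cardsT.
by rewrite -(LagrangeI [set: bT] <[x]>) setTI.
Qed.

Lemma notin_cycle_transversal t i :
  t \in T -> 0 < i < #[x] -> (x ^+ i)^-1 * t \notin T.
Proof.
move=> Tt lt_ix; apply: contra (expg_lt_order_neq1 lt_ix) => Tt'.
have := cycle_transversal_uniq Tt' Tt.
rewrite mem_rcoset -mulgA mulgV mulg1 groupV mem_cycle => /(_ isT)/(canRL (mulgK t)).
by rewrite mulgV => /eqP; rewrite eq_invg1.
Qed.

Lemma wr_expg_order_eq1_transversal f q :
  (((f, x) : W) ^+ (#[x] * q) == 1) =
  [forall t in T, orbit_prod f x #[x] t ^+ q == 1].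
Proof.
have shift i y : (orbit_prod f x #[x] ((x ^+ i)^-1 * y) ^+ q == 1)
               = (orbit_prod f x #[x] y ^+ q == 1).
  elim: i => [|i IHi]; first by rewrite expg0 invg1 mul1g.
  by rewrite expgSr invMg -mulgA orbit_prod_conj -conjXg conjg_eq1.
rewrite wr_expg_order_eq1; apply/forallP/forall_inP => [fq1 t _|fq1 y]; first exact: fq1.
have /rcosetP[_ /cycleP[i ->] def_r] := mem_repr_rcoset <[x]> y.
have := repr_rcoset_transversal y; rewrite def_r => /fq1.
by rewrite -{2}(mulKg (x ^+ i) y) shift.
Qed.

Definition fold_orbits f : {ffun bT -> aT} :=
  [ffun y => if y \in T then orbit_prod f x #[x] y else f y].

Lemma fold_orbits_inj : injective fold_orbits.
Proof.
move=> f g /ffunP eq_fg.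
have eq_out y : y \notin T -> f y = g y.
  by move=> T'y; have := eq_fg y; rewrite !ffunE (negbTE T'y).
apply/ffunP => y; have [Ty|] := boolP (y \in T); last exact: eq_out.
have := eq_fg y; rewrite !ffunE Ty !orbit_prod_recl.
suff -> : \prod_(i < #[x].-1) f ((x ^+ i.+1)^-1 * y) =
          \prod_(i < #[x].-1) g ((x ^+ i.+1)^-1 * y) by move/mulIg.
apply: eq_bigr => i _; apply/eq_out/notin_cycle_transversal => //.
by have := ltn_ord i; have := order_gt0 x; lia.
Qed.

End CycleTransversal.

Lemma card_wr_fiber_expg_eq1 x q :
  #|[set f | ((f, x) : W) ^+ (#[x] * q) == 1]| =
  (#|[set a : aT | a ^+ q == 1%g]| ^ #|cycle_transversal x| *
   #|aT| ^ #|~: cycle_transversal x|)%N.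
Proof.
rewrite -card_ffun_in -[in RHS](card_preimset _ (@fold_orbits_inj x)).
apply: eq_card => f; rewrite !inE wr_expg_order_eq1_transversal.
by apply: eq_forallb_in => t Tt; rewrite ffunE Tt inE.
Qed.

Lemma wr_fiber_expg_eq1_ratio x q :
  (#|[set f | (((f, x) : W) ^+ (#[x] * q) == 1)%g]|%:R / (#|aT| ^ #|bT|)%N%:R
   = (#|[set a : aT | (a ^+ q == 1)%g]|%:R / #|aT|%:R) ^+ (#|bT| %/ #[x])%N :> rat)%R.
Proof.
have <- : #|cycle_transversal x| = (#|bT| %/ #[x])%N.
  by rewrite -(card_cycle_transversal x) mulnK.
rewrite card_wr_fiber_expg_eq1 -(cardsC (cycle_transversal x)).
rewrite !natrM !natrX expr_div_n exprD.
have A_neq0 : (#|aT|%:R : rat) != 0%R by rewrite pnatr_eq0 -lt0n; apply/card_gt0P; exists 1%g.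
by field; rewrite !expf_neq0.
Qed.

End WreathPowers.

Lemma order_le_max_order (G : finGroupType) (x : G) : (#[x]%g <= max_order G)%N.
Proof. exact: (@leq_bigmax _ (fun y : G => #[y]%g) x). Qed.

Lemma exists_order_max_order (G : finGroupType) : exists x : G, #[x]%g = max_order G.
Proof. by exists [arg max_(y > (1%g : G)) #[y]%g]; rewrite /max_order (bigmax_eq_arg 1%g). Qed.

Section PGroupOrders.
Variables (p : nat) (G : finGroupType) (n : nat).
Hypotheses (p_pr : prime p) (cardG : #|G| = (p ^ n)%N).

Lemma order_pgroupE (x : G) : #[x]%g = (p ^ logn p #[x]%g)%N.
Proof.
have := order_dvdG (in_setT x); rewrite cardsT cardG.
by case/(dvdn_pfactor _ _ p_pr) => m _ ->; rewrite pfactorK.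
Qed.

Lemma expg_pfactor_eq1 (x : G) c : (x ^+ (p ^ c) == 1)%g = (logn p #[x]%g <= c)%N.
Proof. by rewrite -order_dvdn {1}order_pgroupE dvdn_Pexp2l ?prime_gt1. Qed.

Lemma logn_order_le_card (x : G) : (logn p #[x]%g <= n)%N.
Proof.
rewrite -(pfactorK n p_pr) -cardG -cardsT dvdn_leq_log ?cardG_gt0 //.
exact: order_dvdG (in_setT x).
Qed.

Lemma logn_order_le_max d (x : G) : max_order G = (p ^ d)%N -> (logn p #[x]%g <= d)%N.
Proof.
move=> maxG; rewrite -(leq_exp2l _ _ (prime_gt1 p_pr)) -order_pgroupE -maxG.
exact: order_le_max_order.
Qed.

Lemma max_order_pfactor_le d : max_order G = (p ^ d)%N -> (d <= n)%N.
Proof.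
have [x ord_x] := exists_order_max_order G; rewrite -ord_x => ord_x_pd.
by have := logn_order_le_card x; rewrite ord_x_pd pfactorK.
Qed.

End PGroupOrders.

Definition order_ratio (p : nat) (G : finGroupType) (s : int) : rat :=
  (#|[set x : G | (logn p #[x]%g)%:Z <= s]|%:R / #|G|%:R)%R.

Lemma order_ratio_lt0 p G s : (s < 0)%R -> order_ratio p G s = 0%R.
Proof.
move=> s_lt0; rewrite /order_ratio (_ : #|_| = 0%N) ?mul0r //.
by apply: eq_card0 => x; rewrite !inE; apply/negbTE/negP; lia.
Qed.

Lemma order_ratio_sub1 p G (m : nat) :
  (order_ratio p G m%:Z - order_ratio p G (m%:Z - 1) =
   #|[set x : G | logn p #[x]%g == m]|%:R / #|G|%:R)%R.
Proof.
rewrite /order_ratio -mulrBl; congr (_ * _)%R; apply/eqP; rewrite subr_eq -natrD eqr_nat.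
rewrite -(cardsID [set x : G | (logn p #[x]%g)%:Z <= m%:Z - 1]%R) addnC.
by apply/eqP; congr (_ + _)%N; apply: eq_card => x; rewrite !inE; apply/idP/idP; lia.
Qed.

Lemma r_ratioE p (G : finGroupType) n k : prime p -> #|G| = (p ^ n)%N ->
  r_ratio p G k = order_ratio p G ((logn p (max_order G))%:Z - k).
Proof.
move=> p_pr cardG; rewrite /r_ratio /order_ratio; congr (_%:R / _)%R.
apply: eq_card => x; rewrite !inE {1}(order_pgroupE p_pr cardG x) natrX.
by rewrite exprnP ler_eXz2l ?ltr1n ?(prime_gt1 p_pr).
Qed.

Lemma sum_by_logn_order p (G : finGroupType) n e (F : nat -> rat) :
  prime p -> #|G| = (p ^ n)%N -> max_order G = (p ^ e)%N ->
  ((\sum_(x : G) F (logn p #[x]%g)) / #|G|%:R =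
   \sum_(i < e.+1) (r_ratio p G i%:Z - r_ratio p G i.+1%:Z) * F (e - i)%N)%R.
Proof.
move=> p_pr cardG maxG; rewrite mulr_suml.
transitivity (\sum_(x : G) \sum_(i < e.+1 | logn p #[x]%g == (e - i)%N) F (e - i)%N / #|G|%:R)%R.
  apply: eq_bigr => x _; have le_xe := logn_order_le_max p_pr cardG x maxG.
  rewrite (big_pred1 (inord (e - logn p #[x]%g))) /= ?inordK ?subKn ?ltnS ?leq_subr // => i.
  by rewrite /= -val_eqE /= inordK ?ltnS ?leq_subr //; apply/eqP/eqP => ?; have := ltn_ord i; lia.
rewrite (exchange_big_dep xpredT) //=; apply: eq_bigr => i _.
rewrite !(r_ratioE _ p_pr cardG) maxG pfactorK // sumr_const.
have -> : ((e%:Z - i%:Z) = (e - i)%N%:Z)%R by rewrite subzn // -ltnS.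
rewrite (_ : (e%:Z - i.+1%:Z) = (e - i)%N%:Z - 1)%R; last by have := ltn_ord i; lia.
rewrite order_ratio_sub1 -[(F _ / _ *+ _)%R]mulr_natl mulrCA [LHS]mulrC; congr (_ * _ * _)%R.
by congr (_%:R)%R; apply: eq_card => x; rewrite inE.
Qed.

Section WreathPGroup.
Variables (p : nat) (aT bT : finGroupType) (a b : nat).
Hypotheses (p_pr : prime p) (cardA : #|aT| = (p ^ a)%N) (cardB : #|bT| = (p ^ b)%N).
Local Notation W := (aT \wr bT).

Lemma card_wreath : #|{: W}| = (p ^ (a * p ^ b + b))%N.
Proof. by rewrite card_prod card_ffun cardA cardB expnD expnM. Qed.

Lemma logn_order_wr_le f x c :
  (logn p #[(f, x) : W]%g <= c)%N =
  (logn p #[x]%g <= c)%N &&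
  [forall y, logn p #[orbit_prod f x #[x]%g y]%g <= c - logn p #[x]%g]%N.
Proof.
rewrite -(expg_pfactor_eq1 p_pr card_wreath).
have [le_xc|lt_cx] := leqP (logn p #[x]%g) c; last first.
  by rewrite wr_expgE xpair_eqE (expg_pfactor_eq1 p_pr cardB) leqNgt lt_cx andbF.
have -> : (p ^ c = #[x]%g * p ^ (c - logn p #[x]%g))%N.
  by rewrite {1}(order_pgroupE p_pr cardB) -expnD subnKC.
rewrite (wr_expg_order_eq1 f x); apply: eq_forallb => y.
exact: (expg_pfactor_eq1 p_pr cardA).
Qed.

Lemma max_order_wreath d e :
  max_order aT = (p ^ d)%N -> max_order bT = (p ^ e)%N ->
  max_order W = (p ^ (d + e))%N.
Proof.
move=> maxA maxB; have p_gt1 := prime_gt1 p_pr.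
apply/eqP; rewrite eqn_leq; apply/andP; split.
  apply/bigmax_leqP => -[f x] _; rewrite (order_pgroupE p_pr card_wreath) leq_exp2l //.
  have le_xe := logn_order_le_max p_pr cardB x maxB.
  rewrite logn_order_wr_le (leq_trans le_xe) ?leq_addl //=; apply/forallP => y.
  by have := logn_order_le_max p_pr cardA (orbit_prod f x #[x]%g y) maxA; lia.
have [x0 ord_x0] := exists_order_max_order bT.
have [a0 ord_a0] := exists_order_max_order aT.
pose f0 : {ffun bT -> aT} := [ffun y => if y == 1%g then a0 else 1%g].
have orbit_f0 : orbit_prod f0 x0 #[x0]%g 1%g = a0.
  rewrite orbit_prod_recl ffunE eqxx big1 ?mulg1 // => i _.
  rewrite ffunE mulg1 invg_eq1 (negbTE (expg_lt_order_neq1 _)) //.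
  by have := ltn_ord i; have := order_gt0 x0; lia.
have := logn_order_wr_le f0 x0 (logn p #[(f0, x0) : W]%g).
rewrite leqnn => /esym/andP[le_ex0 /forallP/(_ 1%g)].
rewrite orbit_f0 ord_a0 ord_x0 maxA maxB !pfactorK // in le_ex0 * => le_d.
apply: leq_trans (order_le_max_order ((f0, x0) : W)).
by rewrite (order_pgroupE p_pr card_wreath) leq_exp2l //; lia.
Qed.

Lemma wr_fiber_order_ratio x (s : int) :
  (#|[set f | (logn p #[(f, x) : W]%g)%:Z <= s]|%:R / (#|aT| ^ #|bT|)%N%:R
   = order_ratio p aT (s - (logn p #[x]%g)%:Z) ^+ (p ^ (b - logn p #[x]%g)) :> rat)%R.
Proof.
have [le_xs|lt_sx] := lerP (logn p #[x]%g)%:Z s; last first.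
  rewrite order_ratio_lt0 ?subr_lt0 // expr0n expn_eq0 eqn0Ngt prime_gt0 //=.
  rewrite (_ : #|_| = 0%N) ?mul0r //; apply: eq_card0 => f; rewrite !inE.
  have := dvdn_leq_log p (order_gt0 _) (order_dvdn_wr f x).
  by move=> ?; apply/negbTE/negP; lia.
case: s le_xs => [m|m] le_xm; last by lia.
rewrite lez_nat in le_xm; rewrite subzn //.
have -> : [set f | (logn p #[(f, x) : W]%g)%:Z <= m%:Z]%R =
          [set f | ((f, x) : W) ^+ (#[x] * p ^ (m - logn p #[x]%g)) == 1]%g.
  apply/setP => f; rewrite !inE lez_nat -(expg_pfactor_eq1 p_pr card_wreath).
  by rewrite {1}(order_pgroupE p_pr cardB x) -expnD subnKC.
rewrite (wr_fiber_expg_eq1_ratio aT x); congr ((_%:R / _) ^+ _)%R.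
  by apply: eq_card => y; rewrite !inE lez_nat (expg_pfactor_eq1 p_pr cardA).
by rewrite cardB {1}(order_pgroupE p_pr cardB x) -expnB ?prime_gt0 ?(logn_order_le_card p_pr cardB).
Qed.

Lemma order_ratio_wreath (s : int) :
  (order_ratio p W s =
   (\sum_(x : bT) order_ratio p aT (s - (logn p #[x]%g)%:Z) ^+ (p ^ (b - logn p #[x]%g)))
     / #|bT|%:R)%R.
Proof.
rewrite /order_ratio card_prod card_ffun (card_set_prod (fun u : W => _)) natr_sum.
rewrite !mulr_suml; apply: eq_bigr => x _.
by rewrite -wr_fiber_order_ratio natrM invfM mulrA.
Qed.

End WreathPGroup.

Theorem theorem5 (p : nat) (A B : finGroupType) (a b d e : nat) :
  prime p ->
  #|A| = (p ^ a)%N -> #|B| = (p ^ b)%N -> (1 <= a)%N -> (1 <= b)%N ->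
  max_order A = (p ^ d)%N -> max_order B = (p ^ e)%N ->
  max_order (A \wr B) = (p ^ (d + e))%N /\
  forall k : int,
    r_ratio p (A \wr B) k =
    (\sum_(i < e.+1)
       (r_ratio p B (i%:Z) - r_ratio p B ((i.+1)%:Z)) *
       (r_ratio p A (k - i%:Z)) ^+ (p ^ (b - e + i))%N)%R.
Proof.
move=> p_pr cardA cardB _ _ maxA maxB.
have maxW := max_order_wreath p_pr cardA cardB maxA maxB.
split=> // k.
rewrite (r_ratioE k p_pr (card_wreath cardA cardB)) maxW pfactorK //.
rewrite (order_ratio_wreath p_pr cardA cardB) (sum_by_logn_order
  (fun j => order_ratio p A ((d + e)%N%:Z - k - j%:Z) ^+ (p ^ (b - j)))%R p_pr cardB maxB).
apply: eq_bigr => i _; congr (_ * _)%R.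
have le_ie : (i <= e)%N by rewrite -ltnS.
have le_eb := max_order_pfactor_le p_pr cardB maxB.
rewrite (r_ratioE _ p_pr cardA) maxA pfactorK //.
by congr (order_ratio _ _ _ ^+ (p ^ _))%R; lia.
Qed.
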